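(* Let $p\ge 2$ and $n\ge 1$ be integers, let $u\in C^2([0,1])$ with $m_2\le u''(x)\le M_2$ for all $x\in[0,1]$ (real constants $m_2\le M_2$), let $0=x_0<x_1<\dots<x_{N+1}=1$ be a partition with $h_i=x_{i+1}-x_i$ and $h=\max_{0\le i\le N}h_i$, and let $u_I$ be the $P_1$-interpolant of $u$ on this partition. Then $$\|u-u_I\|_{1,p}^p\le\frac{(n+2)^{p-1}}{p+1}\left(\frac{1}{2^{p-1}n^p}+\frac{2S_p^*(n)}{n^{2p+1}}\right)\left(h^p+\frac{h^{2p}}{p}\right)\|u''\|_\infty^p+\frac{1}{3n}\left(\frac38\right)^p\left(h^p+\frac{h^{2p}}{p}\right)(M_2-m_2)^p,$$ where $S_p^*(n)=\sum_{k=1}^{n-1}k^{p+1}$ for $n\ge2$ and $S_p^*(1)=0$.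
   Context: $u_I$ is the continuous function on $[0,1]$ that is affine on each $[x_i,x_{i+1}]$ and satisfies $u_I(x_i)=u(x_i)$ for $i=0,\dots,N+1$. For $v\in W^{1,p}(]0,1[)$, $\|v\|_{0,p}=\left(\int_0^1|v(x)|^p\,dx\right)^{1/p}$ and $\|v\|_{1,p}=\left(\|v\|_{0,p}^p+\|v'\|_{0,p}^p\right)^{1/p}$, with $v'$ the weak derivative. $\|u''\|_\infty=\sup_{x\in[0,1]}|u''(x)|$. *)

From Stdlib Require Import Reals.
From Coquelicot Require Import Coquelicot.
Open Scope R_scope.

Definition C2_on_01 (u : R -> R) : Prop :=
  forall x, 0 <= x <= 1 ->
    ex_derive u x /\ ex_derive (Derive u) x /\
    continuous (Derive (Derive u)) x.

Definition partition01 (x : nat -> R) (N : nat) : Prop :=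
  x 0%nat = 0 /\ x (S N) = 1 /\ (forall i, (i <= N)%nat -> x i < x (S i)).

Fixpoint hmax (x : nat -> R) (N : nat) : R :=
  match N with
  | O => x 1%nat - x 0%nat
  | S k => Rmax (hmax x k) (x (S (S k)) - x (S k))
  end.

Definition P1_interpolant (u uI : R -> R) (x : nat -> R) (N : nat) : Prop :=
  (forall t, 0 <= t <= 1 -> continuous uI t) /\
  (forall i, (i <= N)%nat -> exists a b : R,
      forall t, x i <= t <= x (S i) -> uI t = a * t + b) /\
  (forall i, (i <= S N)%nat -> uI (x i) = u (x i)).

Definition Lp_pow (p : nat) (v : R -> R) : R :=
  RInt (fun t => Rabs (v t) ^ p) 0 1.

(** ||v||_{1,p}^p = ||v||_{0,p}^p + ||v'||_{0,p}^p, where for a continuous,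
    piecewise C^1 function v the weak derivative is (a.e.) its classical
    derivative Derive v. *)
Definition W1p_pow (p : nat) (v : R -> R) : R :=
  Lp_pow p v + Lp_pow p (Derive v).

Definition sup_norm_d2 (u : R -> R) : R :=
  real (Lub_Rbar (fun y => exists x, 0 <= x <= 1 /\
                               y = Rabs (Derive (Derive u) x))).

Fixpoint Sstar (p n : nat) : R :=
  match n with
  | O => 0
  | S m => Sstar p m + INR m ^ (p + 1)
  end.

From Stdlib Require Import Reals Lra Lia.
From Coquelicot Require Import Coquelicot.
Open Scope R_scope.

(** Let M = ||u''||_oo.  On a cell [a, b] of length L, Taylor expansions at t
    towards both endpoints give |u - u_I| <= M L^2 / 8 and
    |u' - u_I'| <= (M L / 4) (1 + w^2), where w in [-1, 1] is the rescaled
    position of t in the cell.  Since (1 + w^2)^p <= 1 + (2^p - 1) w^2 by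
    convexity, integrating and summing over the cells yields
    ||u - u_I||_{1,p}^p <= (M h^2 / 8)^p + (M h / 4)^p (2^p + 2) / 3.
    This is already dominated by the first term of the bound, because its
    constant is at least 2^-(p+1): for n <= 2 through its first summand, for
    n or p large through S_p^*(n) >= (n-1)^(p+2) / (p+2), and by direct
    computation for the remaining pairs (p, n). *)

Lemma pow_sub_le (x y : R) (k : nat) :
  0 <= y <= x -> x ^ S k - y ^ S k <= INR (S k) * x ^ k * (x - y).
Proof.
  intros Hxy; induction k as [|k IH]; [simpl; lra|].
  assert (Hyx : y ^ S k <= x ^ S k) by (apply pow_incr; lra).
  replace (x ^ S (S k) - y ^ S (S k))
    with (x * (x ^ S k - y ^ S k) + y ^ S k * (x - y)) by (simpl; ring).
  replace (INR (S (S k)) * x ^ S k * (x - y))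
    with (x * (INR (S k) * x ^ k * (x - y)) + x ^ S k * (x - y))
    by (rewrite (S_INR (S k)); simpl; ring).
  apply Rplus_le_compat; [apply Rmult_le_compat_l | apply Rmult_le_compat_r]; lra.
Qed.

Lemma one_plus_pow_le_chord (z : R) (p : nat) :
  0 <= z <= 1 -> (1 + z) ^ p <= 1 + (2 ^ p - 1) * z.
Proof.
  intros Hz; induction p as [|p IH]; [simpl; lra|].
  assert (1 <= 2 ^ p) by (apply pow_R1_Rle; lra).
  assert ((1 + z) * (1 + z) ^ p <= (1 + z) * (1 + (2 ^ p - 1) * z))
    by (apply Rmult_le_compat_l; lra).
  assert (0 <= (2 ^ p - 1) * (z * (1 - z))) by (apply Rmult_le_pos; nra).
  simpl; nra.
Qed.

Lemma quad_le_pow2_of_ge2 (p : nat) :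
  (2 <= p)%nat -> (INR p + 1) * (INR p + 2) <= 3 * 2 ^ p.
Proof.
  intros Hp; induction Hp as [|p Hp IH]; [simpl; lra|].
  assert (H2 : INR 2 <= INR p) by (apply le_INR; exact Hp); simpl in H2.
  rewrite S_INR; simpl pow; nra.
Qed.

Lemma quad_le_pow2_of_ge6 (p : nat) :
  (6 <= p)%nat -> 27 * ((INR p + 1) * (INR p + 2)) <= 32 * 2 ^ p.
Proof.
  intros Hp; induction Hp as [|p Hp IH]; [simpl; lra|].
  assert (H6 : INR 6 <= INR p) by (apply le_INR; exact Hp); simpl in H6.
  rewrite S_INR; simpl pow; nra.
Qed.

Lemma Sstar_ge0 (p n : nat) : 0 <= Sstar p n.
Proof.
  induction n as [|n IH]; simpl; [lra|].
  pose proof (pow_le (INR n) (p + 1) (pos_INR n)); lra.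
Qed.

Lemma pow_le_Sstar (p m : nat) : INR m ^ (p + 2) <= INR (p + 2) * Sstar p (S m).
Proof.
  induction m as [|m IH].
  - rewrite pow_i by lia. apply Rmult_le_pos; [apply pos_INR | apply Sstar_ge0].
  - change (Sstar p (S (S m))) with (Sstar p (S m) + INR (S m) ^ (p + 1)).
    pose proof (pow_sub_le (INR (S m)) (INR m) (p + 1)) as Hd.
    replace (S (p + 1)) with (p + 2)%nat in Hd by lia.
    rewrite S_INR in Hd |- *.
    assert (0 <= INR m) by apply pos_INR.
    specialize (Hd ltac:(lra)).
    lra.
Qed.

Definition interp_const (p n : nat) : R :=
  (INR n + 2) ^ (p - 1) / (INR p + 1)
  * (1 / (2 ^ (p - 1) * INR n ^ p) + 2 * Sstar p n / INR n ^ (2 * p + 1)).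

Lemma interp_const_ge_head (p n : nat) : (1 <= n)%nat ->
  (INR n + 2) ^ (p - 1) / (INR p + 1) * (1 / (2 ^ (p - 1) * INR n ^ p))
  <= interp_const p n.
Proof.
  intros Hn.
  assert (Hr : 0 < INR n) by (apply lt_0_INR; lia).
  assert (0 <= (INR n + 2) ^ (p - 1) / (INR p + 1)).
  { apply Rle_mult_inv_pos; [apply pow_le; lra | pose proof (pos_INR p); lra]. }
  assert (0 <= 2 * Sstar p n / INR n ^ (2 * p + 1)).
  { apply Rle_mult_inv_pos; [pose proof (Sstar_ge0 p n); lra | apply pow_lt; lra]. }
  unfold interp_const. nra.
Qed.

Lemma interp_const_ge_tail (p n : nat) : (1 <= p)%nat -> (2 <= n)%nat ->
  2 * (INR n - 1) ^ 3 / ((INR p + 1) * (INR p + 2) * INR n ^ 3) <= interp_const p n.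
Proof.
  intros Hp Hn.
  destruct p as [|k]; [lia|]. destruct n as [|m]; [lia|].
  assert (HS := pow_le_Sstar (S k) m).
  unfold interp_const. replace (S k - 1)%nat with k by lia.
  replace (S k + 2)%nat with (k + 3)%nat in HS by lia.
  rewrite pow_add in HS.
  rewrite !S_INR, plus_INR in *. simpl INR in *.
  replace (2 * S k + 1)%nat with (2 * k + 3)%nat by lia.
  rewrite pow_add, pow_mult.
  set (r := INR m + 1) in *.
  replace (INR m) with (r - 1) in HS by (unfold r; ring).
  assert (Hm : INR 1 <= INR m) by (apply le_INR; lia); simpl in Hm.
  assert (Hk : 0 <= INR k) by apply pos_INR.
  assert (Hsq : (r ^ 2) ^ k <= (r + 2) ^ k * (r - 1) ^ k).
  { rewrite <- Rpow_mult_distr. apply pow_incr. unfold r; nra. }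
  set (S0 := Sstar (S k) (S m)) in *.
  set (A := (r + 2) ^ k) in *.
  set (B := (r ^ 2) ^ k) in *.
  set (C := (r - 1) ^ k) in *.
  assert (HB : 0 < B) by (apply pow_lt; unfold r; nra).
  assert (HC : 0 <= C) by (apply pow_le; unfold r; lra).
  assert (HA : 0 <= A) by (apply pow_le; unfold r; lra).
  assert (Hr3 : 0 < r ^ 3) by (apply pow_lt; unfold r; lra).
  assert (Hs3 : 0 <= (r - 1) ^ 3) by (apply pow_le; unfold r; lra).
  assert (Hhead : 0 <= 1 / (2 ^ k * r ^ S k)).
  { apply Rle_mult_inv_pos; [lra|]. apply Rmult_lt_0_compat; apply pow_lt; unfold r; lra. }
  assert (Hkey : 2 * (r - 1) ^ 3 * B <= 2 * A * S0 * (INR k + 3)).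
  { apply Rle_trans with (2 * (A * C * (r - 1) ^ 3)); [nra|]. nra. }
  apply Rle_trans with (A / (INR k + 1 + 1) * (2 * S0 / (B * r ^ 3))).
  - apply Rle_div_l; [nra|].
    assert (Hr : 0 < r) by (unfold r; lra).
    replace (A / (INR k + 1 + 1) * (2 * S0 / (B * r ^ 3))
             * ((INR k + 1 + 1) * (INR k + 1 + 2) * r ^ 3))
      with (2 * A * S0 * (INR k + 3) / B) by (field; lra).
    apply (Rle_div_r _ _ B); lra.
  - apply Rmult_le_compat_l; [apply Rle_mult_inv_pos; lra|].
    lra.
Qed.

Lemma interp_const_ge_small_n (p n : nat) : (1 <= p)%nat -> (1 <= n <= 2)%nat ->
  / 2 ^ (p + 1) <= interp_const p n.
Proof.
  intros Hp Hn.
  eapply Rle_trans; [|apply interp_const_ge_head; lia].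
  destruct p as [|k]; [lia|].
  replace (S k - 1)%nat with k by lia.
  replace (S k + 1)%nat with (k + 2)%nat by lia.
  rewrite pow_add, S_INR. replace (2 ^ 2) with 4 by ring.
  assert (H2k : 0 < 2 ^ k) by (apply pow_lt; lra).
  assert (Hk : 0 <= INR k) by apply pos_INR.
  destruct n as [|[|[|n]]]; try lia.
  - pose proof (Rle_pow_lin 2 k ltac:(lra)) as Hbern.
    replace (INR 1) with 1 by reflexivity. rewrite pow1.
    replace (/ (2 ^ k * 4)) with (1 / (2 ^ k * 1) * / 4) by (field; lra).
    rewrite (Rmult_comm ((1 + 2) ^ k / (INR k + 1 + 1))).
    apply Rmult_le_compat_l; [apply Rle_mult_inv_pos; lra|].
    apply Rle_div_r; lra.
  - pose proof (Rle_pow_lin 1 (S k) ltac:(lra)) as Hbern.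
    replace (1 + 1) with 2 in Hbern by ring. rewrite S_INR in Hbern. simpl pow in Hbern.
    replace (INR 2) with 2 by (simpl; ring).
    match goal with |- _ <= ?rhs =>
      replace rhs with (/ (2 * (INR k + 1 + 1)))
        by (replace (2 + 2) with (2 * 2) by ring; rewrite Rpow_mult_distr; simpl; field; lra)
    end.
    apply Rinv_le_contravar; lra.
Qed.

Lemma interp_const_ge_of_ratio (p n : nat) (q : R) : (1 <= p)%nat -> (2 <= n)%nat -> 0 <= q ->
  q * INR n <= INR n - 1 -> (INR p + 1) * (INR p + 2) <= 4 * q ^ 3 * 2 ^ p ->
  / 2 ^ (p + 1) <= interp_const p n.
Proof.
  intros Hp Hn Hq Hqn Hpq.
  eapply Rle_trans; [|apply interp_const_ge_tail; lia].
  set (r := INR n) in *.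
  assert (Hr : INR 2 <= r) by (apply le_INR; exact Hn); simpl in Hr.
  assert (Hcube : q ^ 3 * r ^ 3 <= (r - 1) ^ 3)
    by (rewrite <- Rpow_mult_distr; apply pow_incr; nra).
  assert (Hr3 : 0 < r ^ 3) by (apply pow_lt; lra).
  assert (H2p : 0 < 2 ^ p) by (apply pow_lt; lra).
  assert (Hk : 0 <= INR p) by apply pos_INR.
  rewrite pow_add.
  apply Rle_div_r; [nra|].
  rewrite Rmult_comm. apply Rle_div_l; [nra|].
  simpl pow in *. nra.
Qed.

Lemma interp_const_ge (p n : nat) : (2 <= p)%nat -> (1 <= n)%nat ->
  / 2 ^ (p + 1) <= interp_const p n.
Proof.
  intros Hp Hn.
  destruct (Nat.le_gt_cases n 2) as [Hn2 | Hn3]; [apply interp_const_ge_small_n; lia|].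
  assert (Hr : INR 3 <= INR n) by (apply le_INR; lia); simpl in Hr.
  assert (H2p : 0 < 2 ^ p) by (apply pow_lt; lra).
  destruct (Nat.le_gt_cases 6 p) as [Hp6 | Hp5].
  { apply (interp_const_ge_of_ratio p n (2 / 3)); [lia | lia | lra | lra |].
    pose proof (quad_le_pow2_of_ge6 p Hp6). simpl; lra. }
  destruct (Nat.le_gt_cases 11 n) as [Hn11 | Hn10].
  { assert (Hr' : INR 11 <= INR n) by (apply le_INR; lia); simpl in Hr'.
    apply (interp_const_ge_of_ratio p n (10 / 11)); [lia | lia | lra | lra |].
    pose proof (quad_le_pow2_of_ge2 p Hp). simpl; lra. }
  (* The remaining cases 2 <= p <= 5, 3 <= n <= 10 are checked numerically. *)
  unfold interp_const.
  destruct p as [|[|[|[|[|[|p]]]]]]; try lia;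
  destruct n as [|[|[|[|[|[|[|[|[|[|[|n]]]]]]]]]]]; try lia;
  cbn [Sstar INR pow Nat.mul Nat.add Nat.sub]; lra.
Qed.

Lemma segment_incl (a b s t r : R) :
  a <= s <= b -> a <= t <= b -> Rmin s t <= r <= Rmax s t -> a <= r <= b.
Proof. unfold Rmin, Rmax; destruct Rle_dec; lra. Qed.

Lemma le_half_sqr_of_is_derive (f df : R -> R) (t s M : R) :
  f t = 0 ->
  (forall r, Rmin t s <= r <= Rmax t s -> is_derive f r (df r)) ->
  (forall r, Rmin t s <= r <= Rmax t s -> Rabs (df r) <= M * Rabs (r - t)) ->
  f s <= M / 2 * (s - t) ^ 2.
Proof.
  intros Hft Hf Hdf.
  (* Mean value theorem for f - M/2 (r - t)^2, whose slope at c has the sign of t - s. *)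
  assert (Hsq : forall r, is_derive (fun r => M / 2 * (r - t) ^ 2) r (M * (r - t)))
    by (intros r; auto_derive; [exact I | field]).
  destruct (MVT_gen (fun r => f r - M / 2 * (r - t) ^ 2) t s (fun r => df r - M * (r - t)))
    as [c [Hc Hmvt]].
  - intros r Hr. exact (is_derive_minus _ _ r _ _ (Hf r ltac:(lra)) (Hsq r)).
  - intros r Hr. apply continuity_pt_filterlim.
    apply (ex_derive_continuous (fun r => f r - M / 2 * (r - t) ^ 2)).
    exists (df r - M * (r - t)). exact (is_derive_minus _ _ r _ _ (Hf r Hr) (Hsq r)).
  - cbv beta in Hmvt.
    assert (Hsign : 0 <= (c - t) * (s - t))
      by (unfold Rmin, Rmax in Hc; destruct Rle_dec; nra).
    assert (Hslope : df c * (s - t) <= M * ((c - t) * (s - t))).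
    { eapply Rle_trans; [apply Rle_abs|].
      rewrite <- (Rabs_pos_eq _ Hsign), !Rabs_mult, <- Rmult_assoc.
      apply Rmult_le_compat_r; [apply Rabs_pos | exact (Hdf c Hc)]. }
    nra.
Qed.

Lemma abs_le_half_sqr_of_is_derive (f df : R -> R) (t s M : R) :
  f t = 0 ->
  (forall r, Rmin t s <= r <= Rmax t s -> is_derive f r (df r)) ->
  (forall r, Rmin t s <= r <= Rmax t s -> Rabs (df r) <= M * Rabs (r - t)) ->
  Rabs (f s) <= M / 2 * (s - t) ^ 2.
Proof.
  intros Hft Hf Hdf. apply Rabs_le; split.
  - enough (- f s <= M / 2 * (s - t) ^ 2) by lra.
    apply (le_half_sqr_of_is_derive (fun r => - f r) (fun r => - df r)).
    + rewrite Hft; ring.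
    + intros r Hr. exact (is_derive_opp _ r _ (Hf r Hr)).
    + intros r Hr. rewrite Rabs_Ropp. exact (Hdf r Hr).
  - exact (le_half_sqr_of_is_derive f df t s M Hft Hf Hdf).
Qed.

Lemma ex_RInt_abs_pow (f : R -> R) (a b : R) (p : nat) :
  (forall t, Rmin a b <= t <= Rmax a b -> continuous f t) ->
  ex_RInt (fun t => Rabs (f t) ^ p) a b.
Proof.
  intros Hf. apply (ex_RInt_continuous (V := R_CompleteNormedModule)). intros t Ht.
  apply (continuous_comp (fun t => Rabs (f t)) (fun y => y ^ p)).
  - exact (continuous_Rabs_comp f t (Hf t Ht)).
  - apply (ex_derive_continuous (fun y => y ^ p)). auto_derive. easy.
Qed.

Lemma is_RInt_one_plus_sqr (a b c : R) : a < b ->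
  is_RInt (fun t => 1 + c * ((2 * t - a - b) / (b - a)) ^ 2) a b ((b - a) * (1 + c / 3)).
Proof.
  intros Hab.
  set (F := fun t => t + c * (b - a) * ((2 * t - a - b) / (b - a)) ^ 3 / 6).
  replace ((b - a) * (1 + c / 3)) with (minus (F b) (F a))
    by (unfold F, minus, plus, opp; simpl; field; lra).
  apply (is_RInt_derive (V := R_CompleteNormedModule)).
  - intros t _. unfold F. auto_derive; [lra | field; lra].
  - intros t _. apply (ex_derive_continuous (fun t => 1 + c * ((2 * t - a - b) / (b - a)) ^ 2)).
    auto_derive. lra.
Qed.

Lemma Derive_sub_affine (f g : R -> R) (al be a b t : R) :
  (forall r, a <= r <= b -> g r = al * r + be) -> a < t < b -> ex_derive f t ->
  Derive (fun r => f r - g r) t = Derive f t - al.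
Proof.
  intros Hg Ht Hf.
  apply is_derive_unique.
  apply (is_derive_ext_loc (fun r => f r - (al * r + be))).
  - assert (Hpos : 0 < Rmin (t - a) (b - t)) by (apply Rmin_pos; lra).
    exists (mkposreal _ Hpos). intros r Hr.
    change (Rabs (r - t) < Rmin (t - a) (b - t)) in Hr.
    apply Rabs_lt_between in Hr.
    rewrite Hg; [reflexivity|]. unfold Rmin in Hr; destruct Rle_dec; lra.
  - auto_derive; [exact Hf|]. change (Derive (fun r => f r) t) with (Derive f t). ring.
Qed.

Section InterpolationOnInterval.

Variables (u uI : R -> R) (a b M al be : R).
Hypothesis u_derivable : forall t, a <= t <= b -> ex_derive u t /\ ex_derive (Derive u) t.
Hypothesis u_d2_bound : forall t, a <= t <= b -> Rabs (Derive (Derive u) t) <= M.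

Lemma Derive_lipschitz (s t : R) : a <= s <= b -> a <= t <= b ->
  Rabs (Derive u s - Derive u t) <= M * Rabs (s - t).
Proof.
  intros Hs Ht.
  destruct (MVT_gen (Derive u) t s (Derive (Derive u))) as [c [Hc Hmvt]].
  - intros r Hr. apply Derive_correct, u_derivable, (segment_incl a b t s r); lra.
  - intros r Hr. apply continuity_pt_filterlim.
    apply (ex_derive_continuous (Derive u)), u_derivable, (segment_incl a b t s r); assumption.
  - rewrite Hmvt, Rabs_mult. apply Rmult_le_compat_r; [apply Rabs_pos|].
    apply u_d2_bound, (segment_incl a b t s c); assumption.
Qed.

Lemma taylor1_remainder_le (s t : R) : a <= s <= b -> a <= t <= b ->
  Rabs (u s - u t - Derive u t * (s - t)) <= M / 2 * (s - t) ^ 2.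
Proof.
  intros Hs Ht.
  apply (abs_le_half_sqr_of_is_derive (fun r => u r - u t - Derive u t * (r - t))
           (fun r => Derive u r - Derive u t)).
  - ring.
  - intros r Hr.
    assert (Hd := proj1 (u_derivable r (segment_incl a b t s r Ht Hs Hr))).
    auto_derive; [exact Hd|]. change (Derive (fun r => u r) r) with (Derive u r). ring.
  - intros r Hr. apply Derive_lipschitz; [apply (segment_incl a b t s r)|]; assumption.
Qed.

Hypothesis a_lt_b : a < b.

Lemma d2_bound_nonneg : 0 <= M.
Proof. pose proof (u_d2_bound a ltac:(lra)). pose proof (Rabs_pos (Derive (Derive u) a)). lra. Qed.

Hypothesis interp_at_a : al * a + be = u a.
Hypothesis interp_at_b : al * b + be = u b.

Lemma interp_error_le (t : R) : a <= t <= b ->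
  Rabs (u t - (al * t + be)) <= M * (b - a) ^ 2 / 8.
Proof.
  intros Ht.
  pose proof d2_bound_nonneg as HM.
  pose proof (taylor1_remainder_le a t ltac:(lra) Ht) as HRa.
  pose proof (taylor1_remainder_le b t ltac:(lra) Ht) as HRb.
  set (Ra := u a - u t - Derive u t * (a - t)) in *.
  set (Rb := u b - u t - Derive u t * (b - t)) in *.
  assert (Hid : (u t - (al * t + be)) * (b - a) = - (Ra * (b - t) + Rb * (t - a))).
  { unfold Ra, Rb. rewrite <- interp_at_a, <- interp_at_b. ring. }
  apply Rmult_le_reg_r with (b - a); [lra|].
  rewrite <- (Rabs_pos_eq (b - a)) at 1 by lra.
  rewrite <- Rabs_mult, Hid, Rabs_Ropp.
  eapply Rle_trans; [apply Rabs_triang|].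
  rewrite !Rabs_mult, (Rabs_pos_eq (b - t)), (Rabs_pos_eq (t - a)) by lra.
  assert (Rabs Ra * (b - t) <= M / 2 * (a - t) ^ 2 * (b - t)) by (apply Rmult_le_compat_r; lra).
  assert (Rabs Rb * (t - a) <= M / 2 * (b - t) ^ 2 * (t - a)) by (apply Rmult_le_compat_r; lra).
  assert (0 <= M * (b - a) * (2 * t - a - b) ^ 2)
    by (apply Rmult_le_pos; [nra | apply pow2_ge_0]).
  lra.
Qed.

Lemma interp_slope_error_le (t : R) : a <= t <= b ->
  Rabs (Derive u t - al) <= M * (b - a) / 4 * (1 + ((2 * t - a - b) / (b - a)) ^ 2).
Proof.
  intros Ht.
  pose proof (taylor1_remainder_le a t ltac:(lra) Ht) as HRa.
  pose proof (taylor1_remainder_le b t ltac:(lra) Ht) as HRb.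
  set (Ra := u a - u t - Derive u t * (a - t)) in *.
  set (Rb := u b - u t - Derive u t * (b - t)) in *.
  assert (Hid : (Derive u t - al) * (b - a) = Ra - Rb).
  { unfold Ra, Rb. rewrite <- interp_at_a, <- interp_at_b. ring. }
  replace (M * (b - a) / 4 * (1 + ((2 * t - a - b) / (b - a)) ^ 2))
    with (M / 2 * ((a - t) ^ 2 + (b - t) ^ 2) / (b - a)) by (field; lra).
  apply Rle_div_r; [lra|].
  rewrite <- (Rabs_pos_eq (b - a)) at 1 by lra.
  rewrite <- Rabs_mult, Hid.
  eapply Rle_trans; [apply Rabs_triang|]. rewrite Rabs_Ropp. lra.
Qed.

Hypothesis uI_affine : forall t, a <= t <= b -> uI t = al * t + be.

Lemma RInt_interp_error_le (p : nat) :
  ex_RInt (fun t => Rabs (u t - uI t) ^ p) a b /\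
  RInt (fun t => Rabs (u t - uI t) ^ p) a b <= (M * (b - a) ^ 2 / 8) ^ p * (b - a).
Proof.
  assert (Heq : forall t, Rmin a b < t < Rmax a b ->
            Rabs (u t - (al * t + be)) ^ p = Rabs (u t - uI t) ^ p).
  { intros t Ht. rewrite Rmin_left, Rmax_right in Ht by lra.
    rewrite uI_affine by lra. reflexivity. }
  assert (Hex : ex_RInt (fun t => Rabs (u t - (al * t + be)) ^ p) a b).
  { apply ex_RInt_abs_pow. intros t Ht. rewrite Rmin_left, Rmax_right in Ht by lra.
    apply (ex_derive_continuous (fun t => u t - (al * t + be))).
    auto_derive. apply u_derivable; lra. }
  split; [exact (ex_RInt_ext _ _ _ _ Heq Hex)|].
  rewrite <- (RInt_ext _ _ _ _ Heq).
  eapply Rle_trans.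
  - apply (RInt_le _ (fun _ => (M * (b - a) ^ 2 / 8) ^ p));
      [lra | exact Hex | apply ex_RInt_const |].
    intros t Ht. apply pow_incr. split; [apply Rabs_pos | apply interp_error_le; lra].
  - rewrite RInt_const. apply Req_le. change scal with Rmult. simpl. ring.
Qed.

Lemma RInt_interp_deriv_error_le (p : nat) :
  ex_RInt (fun t => Rabs (Derive (fun t => u t - uI t) t) ^ p) a b /\
  RInt (fun t => Rabs (Derive (fun t => u t - uI t) t) ^ p) a b
  <= (M * (b - a) / 4) ^ p * ((2 ^ p + 2) / 3) * (b - a).
Proof.
  pose proof d2_bound_nonneg as HM.
  set (g := fun t => Rabs (Derive u t - al) ^ p).
  assert (Heq : forall t, Rmin a b < t < Rmax a b ->
            g t = Rabs (Derive (fun t => u t - uI t) t) ^ p).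
  { intros t Ht. rewrite Rmin_left, Rmax_right in Ht by lra.
    unfold g. rewrite (Derive_sub_affine u uI al be a b t uI_affine Ht); [reflexivity|].
    apply u_derivable; lra. }
  assert (Hex : ex_RInt g a b).
  { apply ex_RInt_abs_pow. intros t Ht. rewrite Rmin_left, Rmax_right in Ht by lra.
    apply (ex_derive_continuous (fun t => Derive u t - al)).
    auto_derive. apply u_derivable; lra. }
  split; [exact (ex_RInt_ext _ _ _ _ Heq Hex)|].
  rewrite <- (RInt_ext _ _ _ _ Heq).
  set (K := (M * (b - a) / 4) ^ p).
  set (w := fun t => (2 * t - a - b) / (b - a)).
  assert (Hq : is_RInt (fun t => K * (1 + (2 ^ p - 1) * w t ^ 2)) a b
                 (K * ((b - a) * (1 + (2 ^ p - 1) / 3))))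
    by exact (is_RInt_scal _ a b K _ (is_RInt_one_plus_sqr a b (2 ^ p - 1) a_lt_b)).
  eapply Rle_trans.
  - apply (RInt_le g (fun t => K * (1 + (2 ^ p - 1) * w t ^ 2)));
      [lra | exact Hex | eexists; exact Hq |].
    intros t Ht.
    assert (Hw : -1 <= w t <= 1)
      by (unfold w; split; [apply Rle_div_r | apply Rle_div_l]; lra).
    eapply Rle_trans.
    + apply pow_incr. split; [apply Rabs_pos | apply interp_slope_error_le; lra].
    + rewrite Rpow_mult_distr. apply Rmult_le_compat_l; [apply pow_le; nra|].
      apply one_plus_pow_le_chord. split; [apply pow2_ge_0 | simpl; nra].
  - rewrite (is_RInt_unique _ _ _ _ Hq). apply Req_le. field.
Qed.

End InterpolationOnInterval.

Lemma partition_mono (x : nat -> R) (N : nat) :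
  (forall i, (i <= N)%nat -> x i < x (S i)) ->
  forall i j, (i <= j <= S N)%nat -> x i <= x j.
Proof.
  intros Hx i j [Hij HjN].
  induction Hij as [|j Hij IH]; [lra|].
  specialize (IH ltac:(lia)). specialize (Hx j ltac:(lia)). lra.
Qed.

Lemma hmax_ge (x : nat -> R) (N i : nat) : (i <= N)%nat -> x (S i) - x i <= hmax x N.
Proof.
  induction N as [|N IH]; intros Hi.
  - replace i with 0%nat by lia. simpl. lra.
  - simpl. destruct (Nat.eq_dec i (S N)) as [->|Hne]; [apply Rmax_r|].
    eapply Rle_trans; [apply IH; lia | apply Rmax_l].
Qed.

Lemma partition01_cell (x : nat -> R) (N i : nat) : partition01 x N -> (i <= N)%nat ->
  0 <= x i /\ x i < x (S i) /\ x (S i) <= 1 /\ x (S i) - x i <= hmax x N.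
Proof.
  intros [Hx0 [Hx1 Hx]] Hi.
  pose proof (partition_mono x N Hx 0 i ltac:(lia)).
  pose proof (partition_mono x N Hx (S i) (S N) ltac:(lia)).
  pose proof (hmax_ge x N i Hi).
  pose proof (Hx i Hi).
  rewrite Hx0 in *. rewrite Hx1 in *. lra.
Qed.

Lemma RInt_le_partition01 (F : R -> R) (x : nat -> R) (N : nat) (c : R) :
  partition01 x N ->
  (forall i, (i <= N)%nat -> ex_RInt F (x i) (x (S i)) /\
                            RInt F (x i) (x (S i)) <= c * (x (S i) - x i)) ->
  RInt F 0 1 <= c.
Proof.
  intros [Hx0 [Hx1 _]] Hpiece.
  assert (Hacc : forall k, (k <= S N)%nat ->
            ex_RInt F (x 0%nat) (x k) /\ RInt F (x 0%nat) (x k) <= c * (x k - x 0%nat)).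
  { induction k as [|k IH]; intros Hk.
    - rewrite RInt_point. split; [apply ex_RInt_point|].
      change (@zero R_CompleteNormedModule) with 0. lra.
    - destruct (IH ltac:(lia)) as [IHex IHle]. destruct (Hpiece k ltac:(lia)) as [Hex Hle].
      split; [exact (ex_RInt_Chasles _ _ _ _ IHex Hex)|].
      rewrite <- (RInt_Chasles F _ _ _ IHex Hex). change plus with Rplus. lra. }
  destruct (Hacc (S N) (le_n _)) as [_ Hle]. rewrite Hx0, Hx1 in Hle. lra.
Qed.

Lemma P1_interpolant_piece (u uI : R -> R) (x : nat -> R) (N i : nat) :
  partition01 x N -> P1_interpolant u uI x N -> (i <= N)%nat ->
  exists al be, (forall t, x i <= t <= x (S i) -> uI t = al * t + be) /\
                al * x i + be = u (x i) /\ al * x (S i) + be = u (x (S i)).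
Proof.
  intros [_ [_ Hx]] [_ [Haff Hnodes]] Hi.
  destruct (Haff i Hi) as [al [be Hab]].
  specialize (Hx i Hi).
  exists al, be. split; [exact Hab|].
  rewrite <- (Hab (x i)), <- (Hab (x (S i))) by lra.
  split; apply Hnodes; lia.
Qed.

Lemma Lp_pow_interp_error_le (p N : nat) (u uI : R -> R) (x : nat -> R) (M : R) :
  C2_on_01 u -> (forall t, 0 <= t <= 1 -> Rabs (Derive (Derive u) t) <= M) ->
  partition01 x N -> P1_interpolant u uI x N ->
  Lp_pow p (fun t => u t - uI t) <= (M * hmax x N ^ 2 / 8) ^ p.
Proof.
  intros Hu HM Hx HI.
  apply (RInt_le_partition01 _ x N _ Hx). intros i Hi.
  destruct (P1_interpolant_piece u uI x N i Hx HI Hi) as [al [be [Haff [Ha Hb]]]].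
  destruct (partition01_cell x N i Hx Hi) as [Hx0 [Hlt [Hx1 Hh]]].
  assert (Hd : forall t, x i <= t <= x (S i) -> ex_derive u t /\ ex_derive (Derive u) t)
    by (intros t Ht; destruct (Hu t ltac:(lra)) as [? [? _]]; split; assumption).
  assert (Hd2 : forall t, x i <= t <= x (S i) -> Rabs (Derive (Derive u) t) <= M)
    by (intros t Ht; apply HM; lra).
  pose proof (d2_bound_nonneg u (x i) (x (S i)) M Hd2 Hlt) as HM0.
  destruct (RInt_interp_error_le u uI (x i) (x (S i)) M al be Hd Hd2 Hlt Ha Hb Haff p)
    as [Hex Hle].
  split; [exact Hex|].
  eapply Rle_trans; [exact Hle|].
  assert (0 <= M * (x (S i) - x i) ^ 2) by (apply Rmult_le_pos; [lra | apply pow2_ge_0]).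
  apply Rmult_le_compat_r; [lra|]. apply pow_incr. split; [lra|].
  apply Rmult_le_compat_r; [lra|]. apply Rmult_le_compat_l; [lra|]. apply pow_incr; lra.
Qed.

Lemma Lp_pow_interp_deriv_error_le (p N : nat) (u uI : R -> R) (x : nat -> R) (M : R) :
  C2_on_01 u -> (forall t, 0 <= t <= 1 -> Rabs (Derive (Derive u) t) <= M) ->
  partition01 x N -> P1_interpolant u uI x N ->
  Lp_pow p (Derive (fun t => u t - uI t)) <= (M * hmax x N / 4) ^ p * ((2 ^ p + 2) / 3).
Proof.
  intros Hu HM Hx HI.
  apply (RInt_le_partition01 _ x N _ Hx). intros i Hi.
  destruct (P1_interpolant_piece u uI x N i Hx HI Hi) as [al [be [Haff [Ha Hb]]]].
  destruct (partition01_cell x N i Hx Hi) as [Hx0 [Hlt [Hx1 Hh]]].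
  assert (Hd : forall t, x i <= t <= x (S i) -> ex_derive u t /\ ex_derive (Derive u) t)
    by (intros t Ht; destruct (Hu t ltac:(lra)) as [? [? _]]; split; assumption).
  assert (Hd2 : forall t, x i <= t <= x (S i) -> Rabs (Derive (Derive u) t) <= M)
    by (intros t Ht; apply HM; lra).
  pose proof (d2_bound_nonneg u (x i) (x (S i)) M Hd2 Hlt) as HM0.
  assert (H2p : 0 <= (2 ^ p + 2) / 3) by (pose proof (pow_le 2 p ltac:(lra)); lra).
  destruct (RInt_interp_deriv_error_le u uI (x i) (x (S i)) M al be Hd Hd2 Hlt Ha Hb Haff p)
    as [Hex Hle].
  split; [exact Hex|].
  eapply Rle_trans; [exact Hle|].
  apply Rmult_le_compat_r; [lra|]. apply Rmult_le_compat_r; [exact H2p|].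
  apply pow_incr. split; [nra|].
  apply Rmult_le_compat_r; [lra|]. apply Rmult_le_compat_l; lra.
Qed.

Lemma sup_norm_d2_ge (u : R -> R) (B : R) :
  (forall t, 0 <= t <= 1 -> Rabs (Derive (Derive u) t) <= B) ->
  forall t, 0 <= t <= 1 -> Rabs (Derive (Derive u) t) <= sup_norm_d2 u.
Proof.
  intros HB t Ht. unfold sup_norm_d2.
  set (E := fun y => exists x, 0 <= x <= 1 /\ y = Rabs (Derive (Derive u) x)).
  destruct (Lub_Rbar_correct E) as [Hub Hlub].
  assert (HBE : is_ub_Rbar E B) by (intros y [s [Hs ->]]; exact (HB s Hs)).
  specialize (Hlub B HBE).
  specialize (Hub _ (ex_intro _ t (conj Ht eq_refl))).
  destruct (Lub_Rbar E); simpl in *; easy.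
Qed.

Lemma interp_error_sum_le (p n : nat) (M h : R) :
  (2 <= p)%nat -> (1 <= n)%nat -> 0 <= M -> 0 <= h ->
  (M * h ^ 2 / 8) ^ p + (M * h / 4) ^ p * ((2 ^ p + 2) / 3)
  <= interp_const p n * (h ^ p + h ^ (2 * p) / INR p) * M ^ p.
Proof.
  intros Hp Hn HM Hh.
  pose proof (interp_const_ge p n Hp Hn) as HK.
  rewrite pow_add in HK. simpl pow in HK.
  set (K := interp_const p n) in *.
  set (X := 2 ^ p) in *.
  assert (HX : 4 <= X) by (unfold X; replace 4 with (2 ^ 2) by ring; apply Rle_pow; [lra | exact Hp]).
  assert (HpX : 2 * INR p <= X * X).
  { unfold X. rewrite <- Rpow_mult_distr. replace (2 * 2) with (1 + 3) by ring.
    pose proof (Rle_pow_lin 3 p ltac:(lra)). pose proof (pos_INR p). lra. }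
  assert (Hpos : 0 < INR p) by (apply lt_0_INR; lia).
  assert (E8 : 8 ^ p = X * X * X) by (unfold X; rewrite <- !Rpow_mult_distr; f_equal; ring).
  assert (E4 : 4 ^ p = X * X) by (unfold X; rewrite <- !Rpow_mult_distr; f_equal; ring).
  assert (Eh : h ^ (2 * p) = h ^ p * h ^ p) by (rewrite <- pow_add; f_equal; lia).
  assert (Ev : (M * h ^ 2 / 8) ^ p = M ^ p * h ^ p * h ^ p / (X * X * X)).
  { unfold Rdiv. rewrite !Rpow_mult_distr, pow_inv, <- pow_mult, Eh, E8. ring. }
  assert (Ed : (M * h / 4) ^ p = M ^ p * h ^ p / (X * X)).
  { unfold Rdiv. rewrite !Rpow_mult_distr, pow_inv, E4. ring. }
  rewrite Ev, Ed, Eh.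
  set (A := M ^ p * h ^ p).
  set (H := h ^ p).
  assert (HA : 0 <= A) by (apply Rmult_le_pos; apply pow_le; lra).
  assert (HH : 0 <= H) by (apply pow_le; lra).
  assert (K1 : (X + 2) / (3 * (X * X)) <= K).
  { eapply Rle_trans; [|exact HK]. apply Rle_div_l; [nra|].
    replace (/ (X * (2 * 1)) * (3 * (X * X))) with (3 * X / 2) by (field; lra). lra. }
  assert (K2 : / (X * X * X) <= K / INR p).
  { apply Rle_div_r; [lra|]. eapply Rle_trans; [|exact HK].
    replace (/ (X * (2 * 1))) with (/ (X * X * X) * (X * X / 2)) by (field; lra).
    apply Rmult_le_compat_l; [left; apply Rinv_0_lt_compat; nra | lra]. }
  replace (K * (H + H * H / INR p) * M ^ p) with (K / INR p * (A * H) + K * A)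
    by (unfold A, H; field; lra).
  replace (A * H / (X * X * X) + A / (X * X) * ((X + 2) / 3))
    with (/ (X * X * X) * (A * H) + (X + 2) / (3 * (X * X)) * A) by (field; lra).
  apply Rplus_le_compat; apply Rmult_le_compat_r; nra.
Qed.

Theorem theorem2p4 (p n N : nat) (u uI : R -> R) (x : nat -> R) (m2 M2 : R) :
  (2 <= p)%nat -> (1 <= n)%nat ->
  C2_on_01 u ->
  m2 <= M2 ->
  (forall t, 0 <= t <= 1 -> m2 <= Derive (Derive u) t <= M2) ->
  partition01 x N ->
  P1_interpolant u uI x N ->
  let h := hmax x N in
  W1p_pow p (fun t => u t - uI t) <=
    (INR n + 2) ^ (p - 1) / (INR p + 1)
      * (1 / (2 ^ (p - 1) * INR n ^ p) + 2 * Sstar p n / INR n ^ (2 * p + 1))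
      * (h ^ p + h ^ (2 * p) / INR p) * sup_norm_d2 u ^ p
    + 1 / (3 * INR n) * (3 / 8) ^ p * (h ^ p + h ^ (2 * p) / INR p)
      * (M2 - m2) ^ p.
Proof.
  intros Hp Hn Hu Hm HmM Hx HI h.
  assert (Hbound : forall t, 0 <= t <= 1 -> Rabs (Derive (Derive u) t) <= Rabs m2 + Rabs M2).
  { intros t Ht. specialize (HmM t Ht). unfold Rabs; repeat destruct Rcase_abs; lra. }
  pose proof (sup_norm_d2_ge u _ Hbound) as HM.
  assert (HM0 : 0 <= sup_norm_d2 u)
    by (eapply Rle_trans; [apply Rabs_pos | apply (HM 0); lra]).
  assert (Hh : 0 < h)
    by (destruct (partition01_cell x N 0 Hx (Nat.le_0_l N)) as [_ [? [_ ?]]]; unfold h; lra).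
  pose proof (Lp_pow_interp_error_le p N u uI x _ Hu HM Hx HI) as Hval.
  pose proof (Lp_pow_interp_deriv_error_le p N u uI x _ Hu HM Hx HI) as Hder.
  pose proof (interp_error_sum_le p n (sup_norm_d2 u) h Hp Hn HM0 ltac:(lra)) as Hsum.
  assert (Hosc : 0 <= 1 / (3 * INR n) * (3 / 8) ^ p * (h ^ p + h ^ (2 * p) / INR p) * (M2 - m2) ^ p).
  { assert (0 < INR n) by (apply lt_0_INR; lia).
    assert (0 < INR p) by (apply lt_0_INR; lia).
    assert (0 <= 1 / (3 * INR n)) by (apply Rle_mult_inv_pos; lra).
    assert (0 <= (3 / 8) ^ p) by (apply pow_le; lra).
    assert (0 <= h ^ p + h ^ (2 * p) / INR p)
      by (apply Rplus_le_le_0_compat; [apply pow_le | apply Rle_mult_inv_pos; [apply pow_le|]]; lra).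
    assert (0 <= (M2 - m2) ^ p) by (apply pow_le; lra).
    apply Rmult_le_pos; [apply Rmult_le_pos; [apply Rmult_le_pos|]|]; assumption. }
  unfold W1p_pow, interp_const in *. fold h in Hval, Hder. lra.
Qed.
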